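(* Let $T\subseteq 2^{<\omega}$ be a tree of positive measure $p$ and let $q<1$ be a positive rational. Then there exist a tree $S\subseteq 2^{<\omega}$ of measure at least $q$ and a Turing functional $\Phi$ such that $\Phi(A)$ is an infinite path through $T$ for every infinite path $A$ through $S$.
   Context: The measure of a tree $T\subseteq 2^{<\omega}$ is the Lebesgue (uniform, fair-coin) measure of the set of its infinite paths in $2^\omega$. *)

From Stdlib Require Import Reals QArith List.
Open Scope nat_scope.
Import ListNotations.

Definition prefix (s t : list bool) : Prop := exists r, t = s ++ r.

Definition initseg (A : nat -> bool) (n : nat) : list bool := map A (seq 0 n).

Definition is_tree (T : list bool -> bool) : Prop :=
  forall s t, prefix s t -> T t = true -> T s = true.

Definition is_path (T : list bool -> bool) (A : nat -> bool) : Prop :=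
  forall n, T (initseg A n) = true.

Fixpoint all_strings (n : nat) : list (list bool) :=
  match n with
  | O => [[]]
  | S k => flat_map (fun s => [false :: s; true :: s]) (all_strings k)
  end.

Definition level_count (T : list bool -> bool) (n : nat) : nat :=
  length (filter T (all_strings n)).

(** [tree_measure T m] : the Lebesgue (fair-coin) measure of the set [T] of
    infinite paths through the tree T is m.  Since [T] is the decreasing
    intersection of the clopen sets generated by the level-n nodes of T,
    this measure is the limit of |T cap 2^n| / 2^n. *)
Definition tree_measure (T : list bool -> bool) (m : R) : Prop :=
  Un_cv (fun n => INR (level_count T n) / 2 ^ n)%R m.

Inductive prf : Type :=
| PRzero : prf
| PRsucc : prf
| PRproj : nat -> prf
| PRcomp : prf -> list prf -> prf
| PRrec  : prf -> prf -> prf.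

Fixpoint pr_eval (f : prf) (xs : list nat) {struct f} : nat :=
  match f with
  | PRzero => 0
  | PRsucc => S (hd 0 xs)
  | PRproj i => nth i xs 0
  | PRcomp g gs => pr_eval g (map (fun h => pr_eval h xs) gs)
  | PRrec g h =>
      match xs with
      | [] => pr_eval g []
      | x :: ys =>
          (fix r (k : nat) : nat :=
             match k with
             | O => pr_eval g ys
             | S k' => pr_eval h (k' :: r k' :: ys)
             end) x
      end
  end.

Fixpoint encode (s : list bool) : nat :=
  match s with
  | [] => 0
  | b :: s' => 2 * encode s' + 1 + (if b then 1 else 0)
  end.

Fixpoint decode_aux (fuel n : nat) : list bool :=
  match fuel with
  | O => []
  | S fuel' =>
      match n with
      | O => []
      | S m => Nat.odd m :: decode_aux fuel' (Nat.div2 m)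
      end
  end.

Definition decode (n : nat) : list bool := decode_aux n n.

(** A Turing functional is presented, as usual, by a computable map
    phi : 2^{<omega} -> 2^{<omega} on strings which is monotone for the
    prefix order; Phi(A) = union_k phi(A|k).  Every Turing functional has
    such a presentation with phi primitive recursive (run the oracle machine
    on sigma for |sigma| steps), and conversely. *)
Definition str_map (e : prf) (s : list bool) : list bool :=
  decode (pr_eval e [encode s]).

Definition is_turing_functional (e : prf) : Prop :=
  forall s t, prefix s t -> prefix (str_map e s) (str_map e t).

(** [Phi_output e A X] : Phi^A is total and equals the infinite sequence X
    (every initial segment of X is output on some finite part of A;
    by monotonicity all outputs are then initial segments of X). *)
Definition Phi_output (e : prf) (A X : nat -> bool) : Prop :=
  forall n, exists k, prefix (initseg X n) (str_map e (initseg A k)).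

(** Let [T_s] be the subtree of [T] above a node [s].  The relative level
    counts [|T ∩ 2^n| / 2^n] decrease to [p > 0], so some level [k] has
    [q |T ∩ 2^k| / 2^k < p].  If every [T_s] with [|s| = k] eventually had
    relative count below [q], a single [J] would work for all of them, and
    averaging over the level-[k] nodes would give
    [p <= |T ∩ 2^(k+J)| / 2^(k+J) <= q |T ∩ 2^k| / 2^k < p].  Hence some
    [T_s] has measure at least [q], and the functional prepending [s] maps
    its paths to paths through [T]. *)
From Stdlib Require Import Reals QArith Qreals List Lia Lra Classical.
Import ListNotations.
Open Scope nat_scope.

Definition pr_add : prf := PRrec (PRproj 0) (PRcomp PRsucc [PRproj 1]).

Lemma pr_add_eval x y : pr_eval pr_add [x; y] = x + y.
Proof. induction x; cbn in *; auto. Qed.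

Definition pr_encode_cons (b : bool) : prf :=
  let odd_double := PRcomp PRsucc [PRcomp pr_add [PRproj 0; PRproj 0]] in
  if b then PRcomp PRsucc [odd_double] else odd_double.

Lemma pr_encode_cons_eval b s :
  pr_eval (pr_encode_cons b) [encode s] = encode (b :: s).
Proof. destruct b; cbn -[pr_add]; rewrite pr_add_eval; lia. Qed.

Fixpoint pr_prepend (s : list bool) : prf :=
  match s with
  | [] => PRproj 0
  | b :: s' => PRcomp (pr_encode_cons b) [pr_prepend s']
  end.

Lemma pr_prepend_eval s t : pr_eval (pr_prepend s) [encode t] = encode (s ++ t).
Proof.
  induction s as [|b s IH]; cbn; auto.
  now rewrite IH, pr_encode_cons_eval.
Qed.

Lemma decode_aux_encode s fuel : encode s <= fuel -> decode_aux fuel (encode s) = s.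
Proof.
  revert fuel; induction s as [|b s IH]; intros [|fuel] Hfuel; cbn in Hfuel |- *.
  - reflexivity.
  - reflexivity.
  - destruct b; lia.
  - replace (encode s + (encode s + 0) + 1 + (if b then 1 else 0))
      with (S (2 * encode s + (if b then 1 else 0))) by lia.
    cbn [decode_aux]. destruct b.
    + rewrite Nat.odd_odd, Nat.add_1_r, Nat.div2_succ_double.
      f_equal. apply IH. lia.
    + rewrite Nat.add_0_r, Nat.odd_even, Nat.div2_double.
      f_equal. apply IH. lia.
Qed.

Lemma decode_encode s : decode (encode s) = s.
Proof. apply decode_aux_encode; lia. Qed.

Lemma str_map_prepend s t : str_map (pr_prepend s) t = s ++ t.
Proof. unfold str_map; now rewrite pr_prepend_eval, decode_encode. Qed.

Lemma prepend_turing_functional s : is_turing_functional (pr_prepend s).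
Proof.
  intros a b [r ->]. rewrite !str_map_prepend. exists r. apply app_assoc.
Qed.

Fixpoint prepend_seq (s : list bool) (A : nat -> bool) : nat -> bool :=
  match s with
  | [] => A
  | b :: s' => fun n => match n with O => b | S n' => prepend_seq s' A n' end
  end.

Lemma initseg_succ X n : initseg X (S n) = X 0 :: initseg (fun i => X (S i)) n.
Proof. unfold initseg; cbn; now rewrite <- seq_shift, map_map. Qed.

Lemma initseg_prepend_seq s A n :
  initseg (prepend_seq s A) (length s + n) = s ++ initseg A n.
Proof.
  induction s as [|b s IH]; [reflexivity|].
  cbn [length plus]. rewrite initseg_succ. cbn. f_equal. exact IH.
Qed.

Lemma initseg_prefix X n m : n <= m -> prefix (initseg X n) (initseg X m).
Proof.
  intros Hnm. unfold initseg. replace m with (n + (m - n)) by lia.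
  rewrite seq_app, map_app. eexists; reflexivity.
Qed.

Definition subtree (T : list bool -> bool) (s : list bool) : list bool -> bool :=
  fun t => T (s ++ t).

Lemma subtree_is_tree T s : is_tree T -> is_tree (subtree T s).
Proof.
  intros HT a b [r ->]. apply HT. exists r. now rewrite app_assoc.
Qed.

Lemma prepend_path_subtree T s A :
  is_tree T -> is_path (subtree T s) A ->
  Phi_output (pr_prepend s) A (prepend_seq s A) /\ is_path T (prepend_seq s A).
Proof.
  intros HT HA. split.
  - intros n. exists n. rewrite str_map_prepend, <- initseg_prepend_seq.
    apply initseg_prefix. lia.
  - intros n. apply (HT _ (initseg (prepend_seq s A) (length s + n))).
    + apply initseg_prefix. lia.
    + rewrite initseg_prepend_seq. apply HA.
Qed.

Lemma level_count_succ T n :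
  level_count T (S n) =
  level_count (subtree T [false]) n + level_count (subtree T [true]) n.
Proof.
  unfold level_count, subtree; cbn.
  induction (all_strings n) as [|s L IH]; cbn; [reflexivity|].
  destruct (T (false :: s)), (T (true :: s)); cbn; lia.
Qed.

Lemma level_count_zero T : level_count T 0 = if T [] then 1 else 0.
Proof. unfold level_count; cbn. now destruct (T []). Qed.

Lemma level_count_root_false T n : is_tree T -> T [] = false -> level_count T n = 0.
Proof.
  intros HT Hroot. unfold level_count.
  induction (all_strings n) as [|s L IH]; cbn; [reflexivity|].
  destruct (T s) eqn:Hs; [|exact IH].
  rewrite (HT [] s) in Hroot; [discriminate | now exists s | exact Hs].
Qed.

Lemma level_count_succ_le T n : is_tree T -> level_count T (S n) <= 2 * level_count T n.
Proof.
  revert T; induction n as [|n IH]; intros T HT.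
  - rewrite level_count_succ, !level_count_zero. unfold subtree; cbn.
    destruct (T []) eqn:Hroot.
    + destruct (T [false]), (T [true]); lia.
    + assert (Hchild : forall b, T [b] = false).
      { intros b. destruct (T [b]) eqn:Hb; [|reflexivity].
        rewrite (HT [] [b]) in Hroot; [discriminate | now exists [b] | exact Hb]. }
      now rewrite !Hchild.
  - rewrite (level_count_succ T (S n)), (level_count_succ T n).
    pose proof (IH _ (subtree_is_tree T [false] HT)).
    pose proof (IH _ (subtree_is_tree T [true] HT)).
    lia.
Qed.

Open Scope R_scope.

Definition level_ratio (T : list bool -> bool) (n : nat) : R :=
  INR (level_count T n) / 2 ^ n.

Lemma level_ratio_zero T : level_ratio T 0 = if T [] then 1 else 0.
Proof. unfold level_ratio. rewrite level_count_zero. destruct (T []); cbn; lra. Qed.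

Lemma level_ratio_root_false T n : is_tree T -> T [] = false -> level_ratio T n = 0.
Proof.
  intros HT Hroot. unfold level_ratio.
  rewrite level_count_root_false by assumption. cbn. apply Rdiv_0_l.
Qed.

Lemma level_ratio_succ T n :
  level_ratio T (S n) =
  (level_ratio (subtree T [false]) n + level_ratio (subtree T [true]) n) / 2.
Proof.
  unfold level_ratio. rewrite level_count_succ, plus_INR. cbn [pow].
  assert (0 < 2 ^ n) by (apply pow_lt; lra).
  field. lra.
Qed.

Lemma level_ratio_decreasing T : is_tree T -> Un_decreasing (level_ratio T).
Proof.
  intros HT n. unfold level_ratio.
  pose proof (le_INR _ _ (level_count_succ_le T n HT)) as Hle.
  rewrite mult_INR in Hle. cbn [pow INR] in *.
  assert (0 < 2 ^ n) by (apply pow_lt; lra).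
  apply (Rmult_le_reg_r (2 * 2 ^ n)); [lra|].
  field_simplify; lra.
Qed.

Lemma level_ratio_cv T : is_tree T -> exists m, Un_cv (level_ratio T) m.
Proof.
  intros HT.
  destruct (decreasing_cv (level_ratio T)) as [m Hm]; [now apply level_ratio_decreasing| |].
  - exists 0. intros x [n ->]. unfold opp_seq, level_ratio.
    enough (0 <= INR (level_count T n) / 2 ^ n) by lra.
    apply Rmult_le_pos; [apply pos_INR|].
    apply Rlt_le, Rinv_0_lt_compat, pow_lt. lra.
  - now exists m.
Qed.

Lemma Un_cv_ge_lower_bound u l c : (forall n, c <= u n) -> Un_cv u l -> c <= l.
Proof.
  intros Hbound Hcv. apply Rnot_lt_le. intros Hlt.
  destruct (Hcv (c - l)) as [N HN]; [lra|].
  specialize (HN N (le_n N)). specialize (Hbound N).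
  unfold Rdist in HN. apply Rabs_def2 in HN. lra.
Qed.

Lemma decreasing_eventually_below_uniform (u : list bool -> nat -> R) c k :
  (forall s, Un_decreasing (u s)) ->
  (forall s, length s = k -> exists j, u s j < c) ->
  exists J, forall s, length s = k -> u s J < c.
Proof.
  revert u; induction k as [|k IH]; intros u Hdec Hbelow.
  - destruct (Hbelow [] eq_refl) as [j Hj].
    exists j. now intros [|b s] Hs; [|discriminate].
  - destruct (IH (fun s => u (false :: s))) as [J0 HJ0];
      [intros s; apply Hdec | intros s Hs; apply Hbelow; cbn; lia |].
    destruct (IH (fun s => u (true :: s))) as [J1 HJ1];
      [intros s; apply Hdec | intros s Hs; apply Hbelow; cbn; lia |].
    exists (max J0 J1). intros [|[|] s] Hs; [discriminate| |]; cbn in Hs.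
    + pose proof (decreasing_prop _ _ _ (Hdec (true :: s)) (Nat.le_max_r J0 J1)).
      specialize (HJ1 s ltac:(lia)). cbn in HJ1. lra.
    + pose proof (decreasing_prop _ _ _ (Hdec (false :: s)) (Nat.le_max_l J0 J1)).
      specialize (HJ0 s ltac:(lia)). cbn in HJ0. lra.
Qed.

Lemma level_ratio_add_le T c k J :
  (forall s, length s = k ->
     level_ratio (subtree T s) J <= c * level_ratio (subtree T s) 0) ->
  level_ratio T (k + J) <= c * level_ratio T k.
Proof.
  revert T; induction k as [|k IH]; intros T Hsub.
  - exact (Hsub [] eq_refl).
  - cbn [plus]. rewrite !level_ratio_succ.
    pose proof (IH (subtree T [false]) (fun s Hs => Hsub (false :: s) ltac:(cbn; lia))).
    pose proof (IH (subtree T [true]) (fun s Hs => Hsub (true :: s) ltac:(cbn; lia))).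
    lra.
Qed.

Lemma exists_dense_subtree T p q :
  is_tree T -> Un_cv (level_ratio T) p -> 0 < p -> 0 < q < 1 ->
  exists s, forall j, q <= level_ratio (subtree T s) j.
Proof.
  intros HT Hcv Hp Hq.
  assert (Hk : exists k, q * level_ratio T k < p).
  { destruct (Hcv (p * (1 - q))) as [k Hk]; [nra|].
    exists k. specialize (Hk k (le_n k)). unfold Rdist in Hk.
    apply Rabs_def2 in Hk. nra. }
  destruct Hk as [k Hk].
  apply NNPP. intros Hnone.
  assert (Hbelow : forall s, length s = k -> exists j, level_ratio (subtree T s) j < q).
  { intros s _. apply NNPP. intros Hs. apply Hnone. exists s. intros j.
    apply Rnot_lt_le. intros Hj. apply Hs. now exists j. }
  destruct (decreasing_eventually_below_uniform _ _ _
              (fun s => level_ratio_decreasing _ (subtree_is_tree T s HT)) Hbelow)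
    as [J HJ].
  assert (Hsub : forall s, length s = k ->
            level_ratio (subtree T s) J <= q * level_ratio (subtree T s) 0).
  { intros s Hs. rewrite level_ratio_zero.
    destruct (subtree T s []) eqn:Hroot.
    - specialize (HJ s Hs). lra.
    - rewrite level_ratio_root_false by auto using subtree_is_tree. lra. }
  pose proof (decreasing_ineq _ _ (level_ratio_decreasing T HT) Hcv (k + J)).
  pose proof (level_ratio_add_le T q k J Hsub).
  lra.
Qed.

Theorem proposition4p4 :
  forall (T : list bool -> bool) (p : R),
    is_tree T -> tree_measure T p -> (0 < p)%R ->
  forall q : Q, (0 < q)%Q -> (q < 1)%Q ->
  exists (S : list bool -> bool) (m : R),
    is_tree S /\ tree_measure S m /\ (Q2R q <= m)%R /\
    exists Phi : prf,
      is_turing_functional Phi /\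
      forall A : nat -> bool, is_path S A ->
        exists X : nat -> bool, Phi_output Phi A X /\ is_path T X.
Proof.
  intros T p HT Hcv Hp q Hq0 Hq1.
  assert (Hq : 0 < Q2R q < 1).
  { apply Qlt_Rlt in Hq0, Hq1.
    replace (Q2R 0) with 0 in Hq0 by (unfold Q2R; cbn; lra).
    replace (Q2R 1) with 1 in Hq1 by (unfold Q2R; cbn; lra).
    now split. }
  destruct (exists_dense_subtree T p (Q2R q) HT Hcv Hp Hq) as [s Hdense].
  destruct (level_ratio_cv (subtree T s) (subtree_is_tree T s HT)) as [m Hm].
  exists (subtree T s), m.
  split; [now apply subtree_is_tree|]. split; [exact Hm|].
  split; [exact (Un_cv_ge_lower_bound _ _ _ Hdense Hm)|].
  exists (pr_prepend s). split; [apply prepend_turing_functional|].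
  intros A HA. exists (prepend_seq s A). now apply prepend_path_subtree.
Qed.
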